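(* Let $n\ge1$, $0<\rho<1$, $\varepsilon>0$, and consider $$x_k - C_n^1\rho\, x_{k-1} + C_n^2\rho^2 x_{k-2} - \dots + (-1)^n\rho^n x_{k-n}=v_k,\qquad k=n,n+1,\dots,$$ (characteristic polynomial $(\lambda-\rho)^n$), with initial conditions $x^{(0)}=(x_0,\dots,x_{n-1})$. Fix $t\ge n$. Then the maximum of $x_t$ over all $x^{(0)}$ with $\|x^{(0)}\|_\infty\le1$ and all sequences with $|v_k|\le\varepsilon$ ($k=n,\dots,t$) is attained at $x^{(0)}=((-1)^{n-1},\dots,-1,1)$ (i.e. $x_i=(-1)^{n-1-i}$) and $v_k=\varepsilon$ for $k=n,\dots,t$, and equals $$\alpha_{t,n}+\varepsilon\sum_{k=n}^{t}C_{t-k+n-1}^{n-1}\rho^{t-k},$$ which is strictly less than $\alpha_n+\varepsilon(1-\rho)^{-n}$.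
   Context: $C_p^q=\frac{p!}{q!(p-q)!}$. For $k\ge n$, $\alpha_{k,n}=\sum_{i=0}^{n-1}|P_i(k)|\rho^{k-i}$ where $P_i(k)=\prod_{j\in\{0,\dots,n-1\},j\ne i}\frac{k-j}{i-j}$, and $\alpha_n=\max_{k\ge n}\alpha_{k,n}$. *)

From HB Require Import structures.
From mathcomp Require Import all_boot all_order all_algebra.
Set Implicit Arguments. Unset Strict Implicit. Unset Printing Implicit Defensive.
Import Order.TTheory GRing.Theory Num.Theory.
Local Open Scope ring_scope.

Definition lagP {R : realFieldType} (n i k : nat) : R :=
  \prod_(j < n | (j : nat) != i) ((k%:R - (j : nat)%:R) / (i%:R - (j : nat)%:R)).

Definition alpha_kn {R : realFieldType} (rho : R) (k n : nat) : R :=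
  \sum_(i < n) `|lagP n i k| * rho ^+ (k - i).

Definition is_alpha_n {R : realFieldType} (rho : R) (n : nat) (a : R) : Prop :=
  (exists2 k, (n <= k)%N & a = alpha_kn rho k n) /\
  (forall k, (n <= k)%N -> alpha_kn rho k n <= a).

Definition recur {R : realFieldType} (n : nat) (rho : R) (x v : nat -> R) (t : nat) : Prop :=
  forall k, (n <= k)%N -> (k <= t)%N ->
    \sum_(j < n.+1) (-1) ^+ j * ('C(n, j))%:R * rho ^+ j * x (k - j)%N = v k.

Definition max_value {R : realFieldType} (n : nat) (rho eps : R) (t : nat) : R :=
  alpha_kn rho t n +
  eps * \sum_(n <= k < t.+1) ('C(t - k + n - 1, n - 1))%:R * rho ^+ (t - k).

From HB Require Import structures.
From mathcomp Require Import all_boot all_order all_algebra.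
From mathcomp Require Import ring lra zify.
Import Order.TTheory GRing.Theory Num.Theory.
Local Open Scope ring_scope.

(* The characteristic polynomial (X - rho)^n makes the solutions of the
   homogeneous recurrence exactly the sequences rho^k q(k) with deg q < n, so
   interpolating the initial values and convolving v with the coefficients
   C(d + n - 1, n - 1) rho^d of (1 - rho z)^-n gives
     x_t = sum_i P_i(t) rho^(t-i) x_i + sum_(k=n..t) C(t-k+n-1, n-1) rho^(t-k) v_k;
   both facts reduce to the vanishing of the n-th finite difference of a
   polynomial of degree < n.  For t >= n the sign of P_i(t) is (-1)^(n-1-i),
   which gives the maximum and its maximiser.  The strict bound follows from
   (1 - rho)^n sum_(m <= M) C(m + n - 1, n - 1) rho^m < 1, and alpha_n exists
   because |P_i(k+1) / P_i(k)| <= (1 + 1/(k-n+1))^n tends to 1, so that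
   alpha_(k,n) is eventually nonincreasing. *)

Section FiniteDifferences.
Variable R : idomainType.

Lemma size_sub_comp_XsubC1 (p : {poly R}) :
  (size (p - (p \Po ('X - 1%:P)))%R <= (size p).-1)%N.
Proof.
have [->|pn0] := eqVneq p 0; first by rewrite comp_poly0 subr0 size_poly0.
have size_comp : size (p \Po ('X - 1%:P)) = size p by rewrite size_comp_poly2 ?size_XsubC.
have lead_comp : lead_coef (p \Po ('X - 1%:P)) = lead_coef p.
  by rewrite lead_coef_comp ?size_XsubC // lead_coefXsubC expr1n mulr1.
apply/leq_sizeP => j hj; rewrite coefB.
have [hjs|hjs] := leqP (size p) j.
  by rewrite !nth_default ?size_comp ?subrr.
have -> : j = (size p).-1 by lia.
by move: lead_comp; rewrite /lead_coef size_comp => ->; rewrite subrr.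
Qed.

Lemma findiff_poly_eq0 n (p : {poly R}) (a : R) : (size p <= n)%N ->
  \sum_(j < n.+1) (-1) ^+ j * 'C(n, j)%:R * p.[a - j%:R] = 0.
Proof.
elim: n p a => [|n IHn] p a hp.
  move: hp; rewrite leqn0 size_poly_eq0 => /eqP ->.
  by rewrite big1 // => j _; rewrite horner0 mulr0.
set q := p - (p \Po ('X - 1%:P)).
have q_horner y : q.[y] = p.[y] - p.[y - 1].
  by rewrite /q hornerD hornerN horner_comp hornerXsubC.
have := IHn q a (leq_trans (size_sub_comp_XsubC1 p) _).
rewrite -subn1 leq_subLR add1n => /(_ hp).
under eq_bigr => j _ do rewrite q_horner mulrBr.
rewrite sumrB => /eqP; rewrite subr_eq0 => /eqP sum_eq.
have pascal (j : 'I_n.+1) :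
    (-1) ^+ j.+1 * 'C(n.+1, j.+1)%:R * p.[a - j.+1%:R]
    = (-1) ^+ j.+1 * 'C(n, j.+1)%:R * p.[a - j.+1%:R]
      - (-1) ^+ j * 'C(n, j)%:R * p.[a - j%:R - 1].
  by rewrite binS natrD exprS -natr1 opprD addrA; ring.
rewrite big_ord_recl /= expr0 bin0 mul1r subr0.
under eq_bigr => j _ do rewrite /bump /= add1n pascal.
rewrite sumrB -sum_eq addrA.
rewrite big_ord_recr /= bin_small // mulr0 mul0r addr0.
rewrite [in X in _ - X]big_ord_recl /= expr0 bin0 subr0 mul1r.
by under [in X in _ - X]eq_bigr => j _ do rewrite /bump /= add1n; rewrite mul1r subrr.
Qed.
End FiniteDifferences.

Section Lagrange.
Variable R : realFieldType.

Lemma lagP_poly n i : (i < n)%N ->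
  exists2 P : {poly R}, (size P <= n)%N & forall k, lagP n i k = P.[k%:R].
Proof.
move=> ltin; set F := rem i (iota 0 n).
have F_filter : F = [seq j <- index_iota 0 n | j != i]
  by rewrite /F /index_iota subn0 rem_filter ?iota_uniq.
exists ((\prod_(j <- F) (i%:R - j%:R)^-1) *: \prod_(j <- F) ('X - (j%:R)%:P)).
  rewrite (leq_trans (size_scale_leq _ _)) // size_prod_XsubC size_rem ?mem_iota //.
  by rewrite size_iota prednK ?(leq_ltn_trans _ ltin).
move=> k; rewrite hornerZ horner_prod F_filter !big_filter !big_mkord -big_split.
by apply: eq_bigr => j _; rewrite hornerXsubC mulrC.
Qed.

Lemma lagP_delta n i m : (i < n)%N -> (m < n)%N -> lagP n i m = (i == m)%:R :> R.
Proof.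
move=> ltin ltmn; have [<-|neq_im] := eqVneq i m.
  by rewrite /lagP big1 // => j ne_ji; rewrite divff // subr_eq0 eqr_nat eq_sym.
by rewrite /lagP (bigD1 (Ordinal ltmn)) 1?eq_sym //= subrr !mul0r.
Qed.

Lemma lagP_sign n i t : (i < n)%N -> (n <= t)%N ->
  (-1) ^+ (n - 1 - i) * lagP n i t = `|lagP n i t| :> R.
Proof.
move=> ltin lent.
have sign : (-1) ^+ (n - 1 - i) =
    \prod_(j < n | (j : nat) != i) (if (i < j)%N then -1 else 1) :> R.
  rewrite -big_mkcondr /= (eq_bigl (fun j : 'I_n => (i < j)%N)) => [|j].
    rewrite -(big_geq_mkord i.+1 n xpredT (fun _ => -1)) prodr_const_nat.
    by congr (_ ^+ _); lia.
  by rewrite neq_ltn orbC; case: ltngtP.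
suff ge0 : 0 <= (-1) ^+ (n - 1 - i) * lagP n i t :> R.
  by rewrite -(ger0_norm ge0) normrM normr_sign mul1r.
rewrite sign /lagP -big_split /=; apply: prodr_ge0 => j ne_ji.
have t_gt_j : 0 < t%:R - (j : nat)%:R :> R by rewrite subr_gt0 ltr_nat (leq_trans _ lent).
have [ltij|ltji|eqij] := ltngtP i j; last by rewrite eqij eqxx in ne_ji.
  by rewrite mulN1r -mulrN -invrN opprB divr_ge0 ?ltW // subr_gt0 ltr_nat.
by rewrite mul1r divr_ge0 ?ltW // subr_gt0 ltr_nat.
Qed.
End Lagrange.

Lemma rising_fact_bin m p : (\prod_(0 <= i < p) (m + i.+1) = 'C(m + p, p) * p`!)%N.
Proof.
elim: p => [|p IHp]; first by rewrite big_nil bin0 fact0.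
rewrite big_nat_recr //= IHp factS.
have := mul_bin_diag (m + p.+1) p; rewrite addnS /=.
nia.
Qed.

Section BinomialPolynomial.
Variable R : numFieldType.

Definition binom_poly p : {poly R} :=
  (p`!%:R)^-1 *: \prod_(0 <= i < p) ('X - (- i.+1%:R)%:P).

Lemma size_binom_poly p : (size (binom_poly p) <= p.+1)%N.
Proof.
by rewrite (leq_trans (size_scale_leq _ _)) // size_prod_XsubC size_iota subn0.
Qed.

Lemma binom_poly_nat p m : (binom_poly p).[m%:R] = 'C(m + p, p)%:R.
Proof.
rewrite hornerZ horner_prod.
under eq_bigr => i _ do rewrite hornerXsubC opprK -natrD.
rewrite -natr_prod rising_fact_bin natrM mulrC mulfK //.
by rewrite pnatr_eq0 -lt0n fact_gt0.
Qed.

Lemma binom_poly_neg p e : (0 < e <= p)%N -> (binom_poly p).[- e%:R] = 0.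
Proof.
case/andP=> e_gt0 le_ep; rewrite hornerZ horner_prod (bigD1_seq e.-1) ?iota_uniq //=.
  by rewrite hornerXsubC prednK // subrr mul0r mulr0.
by rewrite mem_iota; lia.
Qed.

(* Coefficientwise, (1 - z)^n * (1 - z)^-n = 1. *)
Lemma alt_bin_conv n d : (1 <= n)%N ->
  \sum_(j < n.+1) (-1) ^+ j * 'C(n, j)%:R *
     (if (j <= d)%N then 'C(d - j + n - 1, n - 1)%:R else 0) = (d == 0)%:R :> R.
Proof.
move=> n_gt0; case: d => [|d].
  rewrite big_ord_recl /= add0n subn1 binn bin0 expr0 !mul1r big1 ?addr0 // => j _.
  by rewrite mulr0.
have size_bp := size_binom_poly (n - 1); rewrite subn1 prednK // in size_bp.
rewrite -[RHS](findiff_poly_eq0 _ _ _ d.+1%:R size_bp); apply: eq_bigr => j _; congr (_ * _).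
have le_jn := ltn_ord j; case: leqP => [le_jd|lt_dj].
  by rewrite -natrB // binom_poly_nat -subn1 addnBA.
have -> : d.+1%:R - j%:R = - (j - d.+1)%:R :> R by rewrite natrB ?opprB // ltnW.
by rewrite binom_poly_neg // subn_gt0 lt_dj /= leq_subLR; lia.
Qed.
End BinomialPolynomial.

Section LinearRecurrence.
Variables (R : realFieldType) (n : nat) (rho : R).
Hypotheses (n_gt0 : (0 < n)%N) (rho_neq0 : rho != 0).

Definition recop (x : nat -> R) k :=
  \sum_(j < n.+1) (-1) ^+ j * 'C(n, j)%:R * rho ^+ j * x (k - j)%N.

Lemma recur_unique x z v t : (forall i, (i < n)%N -> x i = z i) ->
  recur n rho x v t -> recur n rho z v t -> forall m, (m <= t)%N -> x m = z m.
Proof.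
move=> eq_init recx recz m; elim/ltn_ind: m => m IHm le_mt.
have [lt_mn|le_nm] := ltnP m n; first exact: eq_init.
have /eqP := recx m le_nm le_mt; rewrite -(recz m le_nm le_mt) -subr_eq0 -sumrB.
rewrite big_ord_recl /= subn0 expr0 bin0 !mulr1 mul1r big1 ?addr0 => [|j _].
  by rewrite mul1r subr_eq0 => /eqP.
by rewrite IHm ?subrr // ?leq_subr; rewrite /bump /=; have := ltn_ord j; lia.
Qed.

Definition homsol (c : nat -> R) m :=
  \sum_(i < n) lagP n i m * (rho ^+ m / rho ^+ i) * c i.

Lemma homsol_small c m : (m < n)%N -> homsol c m = c m.
Proof.
move=> lt_mn; rewrite /homsol (bigD1 (Ordinal lt_mn)) //= lagP_delta // eqxx mul1r.
rewrite divff ?expf_neq0 // mul1r big1 ?addr0 // => i.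
by rewrite -(inj_eq val_inj) /= => /negbTE ne_im; rewrite lagP_delta // ne_im !mul0r.
Qed.

Lemma recop_homsol c K : (n <= K)%N -> recop (homsol c) K = 0.
Proof.
move=> le_nK.
transitivity (\sum_(i < n) (rho ^+ K / rho ^+ i * c i) *
    \sum_(j < n.+1) (-1) ^+ j * 'C(n, j)%:R * lagP n i (K - j)).
  rewrite /recop /homsol; under eq_bigr => j _ do rewrite big_distrr.
  rewrite exchange_big; apply: eq_bigr => i _; rewrite big_distrr; apply: eq_bigr => j _ /=.
  have le_jK : (j <= K)%N by rewrite (leq_trans _ le_nK) // -ltnS.
  have -> : rho ^+ K = rho ^+ j * rho ^+ (K - j) by rewrite -exprD subnKC.
  by field; rewrite expf_neq0.
rewrite big1 // => i _; have [P size_P lagPE] := lagP_poly R _ _ (ltn_ord i).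
suff -> : \sum_(j < n.+1) (-1) ^+ j * 'C(n, j)%:R * lagP n i (K - j) = 0 :> R.
  by rewrite mulr0.
rewrite -[RHS](findiff_poly_eq0 _ _ _ K%:R size_P); apply: eq_bigr => j _.
by rewrite lagPE natrB // (leq_trans _ le_nK) // -ltnS.
Qed.

(* Convolution of v with the coefficients of (1 - rho z)^-n. *)
Definition partsol (v : nat -> R) m :=
  \sum_(n <= k < m.+1) 'C(m - k + n - 1, n - 1)%:R * rho ^+ (m - k) * v k.

Lemma partsol_small v m : (m < n)%N -> partsol v m = 0.
Proof. by move=> lt_mn; rewrite /partsol big_geq. Qed.

Lemma partsol_widen v m K : (m <= K)%N -> partsol v m =
  \sum_(k < K.+1 | (n <= k <= m)%N) 'C(m - k + n - 1, n - 1)%:R * rho ^+ (m - k) * v k.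
Proof.
move=> le_mK; rewrite /partsol (big_nat_widen _ _ K.+1) // big_geq_mkord.
by apply: eq_bigl => k; rewrite ltnS andbC.
Qed.

Lemma recop_partsol v K : (n <= K)%N -> recop (partsol v) K = v K.
Proof.
move=> le_nK.
transitivity (\sum_(k < K.+1) if (n <= k <= K)%N then rho ^+ (K - k) * v k *
  \sum_(j < n.+1) (-1) ^+ j * 'C(n, j)%:R *
     (if (j <= K - k)%N then 'C(K - k - j + n - 1, n - 1)%:R else 0) else 0).
  rewrite /recop; under eq_bigr => j _.
    by rewrite (partsol_widen _ _ _ (leq_subr j K)) big_distrr big_mkcond; over.
  rewrite exchange_big /=; apply: eq_bigr => k _.
  case: ifP => [/andP[le_nk le_kK]|k_out]; last first.
    by rewrite big1 // => j _; case: ifP => //; lia.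
  rewrite big_distrr; apply: eq_bigr => j _ /=.
  case: (leqP j (K - k)) => [le_jKk|lt_Kkj]; last by rewrite ifF ?mulr0 //; lia.
  have -> : (n <= k <= K - j)%N by lia.
  have -> : rho ^+ (K - k) = rho ^+ j * rho ^+ (K - k - j) by rewrite -exprD subnKC.
  by rewrite (subnAC K j k); ring.
rewrite (bigD1 ord_max) //= [X in _ + X]big1 => [|k ne_kK].
  by rewrite le_nK leqnn subnn expr0 mul1r alt_bin_conv // eqxx mulr1 addr0.
case: ifP => // /andP[_ le_kK]; rewrite alt_bin_conv // subn_eq0 leqNgt.
by move: ne_kK; rewrite -(inj_eq val_inj) /= => ne_kK; rewrite ltn_neqAle ne_kK le_kK mulr0.
Qed.

Lemma recur_homsol_partsol c v t : recur n rho (fun m => homsol c m + partsol v m) v t.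
Proof.
move=> K le_nK _; transitivity (recop (homsol c) K + recop (partsol v) K).
  by rewrite /recop -big_split; apply: eq_bigr => j _; rewrite mulrDr.
by rewrite recop_homsol // recop_partsol // add0r.
Qed.

Lemma recur_solution x v t : recur n rho x v t ->
  forall m, (m <= t)%N -> x m = homsol x m + partsol v m.
Proof.
move=> recx; apply: recur_unique recx (recur_homsol_partsol x v t) => i lt_in.
by rewrite homsol_small // partsol_small // addr0.
Qed.
End LinearRecurrence.

Section ExtremalValue.
Variables (R : realFieldType) (n : nat) (rho : R).
Hypothesis rho_gt0 : 0 < rho.

Lemma homsolE c t : (n <= t)%N ->
  homsol R n rho c t = \sum_(i < n) lagP n i t * rho ^+ (t - i) * c i.
Proof. by move=> le_nt; apply: eq_bigr => i _; rewrite -expfB // (leq_trans _ le_nt). Qed.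

Lemma homsol_le_alpha c t : (n <= t)%N -> (forall i, (i < n)%N -> `|c i| <= 1) ->
  homsol R n rho c t <= alpha_kn rho t n.
Proof.
move=> le_nt c_le1; rewrite homsolE //; apply: ler_sum => i _.
rewrite (le_trans (ler_norm _)) // !normrM (ger0_norm (exprn_ge0 _ (ltW rho_gt0))).
by rewrite ler_piMr ?c_le1 // mulr_ge0 // exprn_ge0 // ltW.
Qed.

Lemma homsol_alt_sign t : (n <= t)%N ->
  homsol R n rho (fun i => (-1) ^+ (n - 1 - i)) t = alpha_kn rho t n.
Proof.
move=> le_nt; rewrite homsolE //; apply: eq_bigr => i _.
by rewrite -lagP_sign //; ring.
Qed.

Lemma partsol_le v eps t : (forall k, (n <= k)%N -> (k <= t)%N -> `|v k| <= eps) ->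
  partsol R n rho v t <=
  eps * \sum_(n <= k < t.+1) 'C(t - k + n - 1, n - 1)%:R * rho ^+ (t - k).
Proof.
move=> v_le; rewrite mulr_sumr; apply: ler_sum_nat => k /andP[le_nk lt_kt].
rewrite [X in _ <= X]mulrC ler_wpM2l //.
  by rewrite mulr_ge0 // exprn_ge0 // ltW.
exact: le_trans (ler_norm _) (v_le k le_nk lt_kt).
Qed.

Lemma partsol_const eps t :
  partsol R n rho (fun=> eps) t =
  eps * \sum_(n <= k < t.+1) 'C(t - k + n - 1, n - 1)%:R * rho ^+ (t - k).
Proof. by rewrite mulr_sumr; apply: eq_bigr => k _; rewrite mulrC. Qed.
End ExtremalValue.

Lemma sum_bin_geomS (R : comPzRingType) (rho : R) p M :
  (1 - rho) * \sum_(m < M.+1) 'C(m + p.+1, p.+1)%:R * rho ^+ m =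
  \sum_(m < M.+1) 'C(m + p, p)%:R * rho ^+ m - 'C(M + p.+1, p.+1)%:R * rho ^+ M.+1.
Proof.
elim: M => [|M IHM]; first by rewrite !big_ord1 !add0n !binn expr0 expr1; ring.
rewrite big_ord_recr /= mulrDr IHM [in RHS]big_ord_recr /= addSn binS addnS natrD !exprS.
ring.
Qed.

Lemma sum_bin_geom_lt (R : realFieldType) (rho : R) p M : 0 < rho -> rho < 1 ->
  (1 - rho) ^+ p.+1 * \sum_(m < M.+1) 'C(m + p, p)%:R * rho ^+ m < 1.
Proof.
move=> rho_gt0 rho_lt1; have rho1_gt0 : 0 < 1 - rho by rewrite subr_gt0.
elim: p => [|p IHp].
  under eq_bigr => m _ do rewrite addn0 bin0 mul1r.
  rewrite expr1 -opprB mulNr -subrX1 opprB ltrBlDr ltrDl.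
  exact: exprn_gt0.
rewrite exprS -mulrA mulrCA sum_bin_geomS mulrBr ltrBlDr (lt_le_trans IHp) // lerDl.
by rewrite !mulr_ge0 ?exprn_ge0 // ltW.
Qed.

Lemma sum_bin_rev (R : pzSemiRingType) (rho : R) n t : (0 < n)%N -> (n <= t)%N ->
  \sum_(n <= k < t.+1) 'C(t - k + n - 1, n - 1)%:R * rho ^+ (t - k) =
  \sum_(m < (t - n).+1) 'C(m + (n - 1), n - 1)%:R * rho ^+ m.
Proof.
move=> n_gt0 le_nt; rewrite big_nat_rev /= -{1}(add0n n) big_addn big_mkord subSn //.
apply: eq_bigr => m _; have -> : (t - (n + t.+1 - (m + n).+1) = m)%N by have := ltn_ord m; lia.
by rewrite addnBA.
Qed.

Lemma max_value_lt (R : realFieldType) n (rho eps : R) t a :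
  (0 < n)%N -> (n <= t)%N -> 0 < rho -> rho < 1 -> 0 < eps ->
  is_alpha_n rho n a -> max_value n rho eps t < a + eps * (1 - rho) ^- n.
Proof.
move=> n_gt0 le_nt rho_gt0 rho_lt1 eps_gt0 [_ alpha_le].
rewrite /max_value ler_ltD ?alpha_le // ltr_pM2l // sum_bin_rev //.
rewrite -div1r ltr_pdivlMr ?exprn_gt0 ?subr_gt0 // mulrC.
by have := sum_bin_geom_lt _ _ (n - 1)%N (t - n)%N rho_gt0 rho_lt1; rewrite subn1 prednK.
Qed.

Lemma expr1D_le_lin (R : realFieldType) (x : R) n :
  0 <= x -> x <= 1 -> (1 + x) ^+ n <= 1 + 3%:R ^+ n * x.
Proof.
move=> x_ge0 x_le1; elim: n => [|n IHn]; first by rewrite !expr0 mul1r lerDl.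
have three_n_ge1 : 1 <= 3%:R ^+ n :> R by rewrite exprn_ege1 // ler1n.
rewrite exprSr exprS (le_trans (ler_wpM2r _ IHn)) ?addr_ge0 //.
set c := 3%:R ^+ n in three_n_ge1 *.
have : 0 <= (c - 1) * x + c * x * (1 - x).
  by rewrite addr_ge0 ?mulr_ge0 ?subr_ge0 // (le_trans ler01).
lra.
Qed.

Lemma eventually_noninc_max (R : realDomainType) (f : nat -> R) n N : (n <= N)%N ->
  (forall k, (N <= k)%N -> f k.+1 <= f k) ->
  exists2 k0, (n <= k0)%N & forall k, (n <= k)%N -> f k <= f k0.
Proof.
move=> le_nN f_noninc.
have f_le_N d : f (N + d)%N <= f N.
  by elim: d => [|d IHd]; rewrite ?addn0 // addnS (le_trans (f_noninc _ _)) ?leq_addr.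
pose P := fun i : 'I_N.+1 => (n <= i)%N.
have [k0 le_nk0 k0_max] := @arg_maxP _ _ _ (Ordinal (ltnSn N)) P (fun i => f i) le_nN.
exists k0 => // k le_nk; have [le_kN|lt_Nk] := leqP k N.
  exact: (k0_max (Ordinal (le_kN : (k < N.+1)%N))).
rewrite -(subnKC (ltnW lt_Nk)) (le_trans (f_le_N _)) //.
exact: (k0_max (Ordinal (ltnSn N))).
Qed.

Lemma normr_lagP_succ (R : realFieldType) n i k : (n <= k)%N ->
  `|lagP n i k.+1| <= `|lagP n i k| * (1 + ((k - n).+1%:R)^-1) ^+ n :> R.
Proof.
move=> le_nk; set m : R := (k - n).+1%:R.
have k_gt_j (j : 'I_n) : 0 < k%:R - (j : nat)%:R :> R.
  by rewrite subr_gt0 ltr_nat (leq_trans _ le_nk).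
have lagP_succ : lagP n i k.+1 = lagP n i k *
    \prod_(j < n | (j : nat) != i) (1 + (k%:R - (j : nat)%:R)^-1) :> R.
  rewrite /lagP -big_split; apply: eq_bigr => j _ /=.
  rewrite mulrDr mulr1 mulrAC divff ?lt0r_neq0 // -[_^-1 in RHS]mul1r -mulrDl.
  by rewrite mul1r -natr1 addrAC.
have factor_ge0 (j : 'I_n) : 0 <= 1 + (k%:R - (j : nat)%:R)^-1 :> R.
  by rewrite addr_ge0 // invr_ge0 ltW.
rewrite lagP_succ normrM ler_wpM2l // ger0_norm ?prodr_ge0 //.
rewrite -[X in _ ^+ X](card_ord n) -prodr_const big_mkcond /=.
apply: ler_prod => j _; case: ifP => _; last by rewrite ler01 lerDl invr_ge0 ler0n.
rewrite factor_ge0 lerD2l lef_pV2 ?posrE ?ltr0n ?k_gt_j // /m -natrB ?ler_nat //.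
  by rewrite ltn_sub2l // (leq_trans _ le_nk).
by rewrite (leq_trans _ le_nk) // ltnW.
Qed.

Lemma alpha_kn_succ_le (R : realFieldType) (rho : R) n k : 0 < rho -> (n <= k)%N ->
  rho * (1 + ((k - n).+1%:R)^-1) ^+ n <= 1 -> alpha_kn rho k.+1 n <= alpha_kn rho k n.
Proof.
move=> rho_gt0 le_nk growth_le1; apply: ler_sum => i _.
have le_ik : (i <= k)%N by rewrite ltnW // (leq_trans _ le_nk).
have pow_ge0 : 0 <= rho ^+ (k - i) * rho by rewrite mulr_ge0 ?exprn_ge0 // ltW.
rewrite subSn // exprSr (le_trans (ler_wpM2r pow_ge0 (normr_lagP_succ _ _ i _ le_nk))) //.
set B := _ ^+ n; have -> : `|lagP n i k| * B * (rho ^+ (k - i) * rho) =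
  `|lagP n i k| * rho ^+ (k - i) * (rho * B) by ring.
by rewrite ler_piMr // mulr_ge0 ?exprn_ge0 // ltW.
Qed.

Lemma alpha_n_exists (R : archiRealFieldType) (rho : R) n : 0 < rho -> rho < 1 ->
  exists a, is_alpha_n rho n a.
Proof.
move=> rho_gt0 rho_lt1; have rho1_gt0 : 0 < 1 - rho by rewrite subr_gt0.
set c := 3%:R ^+ n / (1 - rho).
have c_ge0 : 0 <= c by rewrite divr_ge0 ?exprn_ge0 ?ler0n // ltW.
have := archi_boundP c_ge0; set b := Num.Def.archi_bound c => lt_cb.
have noninc k : (n + b <= k)%N -> alpha_kn rho k.+1 n <= alpha_kn rho k n.
  move=> le_k; apply: alpha_kn_succ_le => //; first by rewrite (leq_trans (leq_addr b n)).
  set m : R := (k - n).+1%:R; have m_gt0 : 0 < m by rewrite ltr0n.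
  have c_lt_m : c < m by rewrite (lt_le_trans lt_cb) // ler_nat; lia.
  have inv_ge0 : 0 <= m^-1 by rewrite invr_ge0 ltW.
  have inv_le1 : m^-1 <= 1 by rewrite invf_le1 // ler1n.
  rewrite (le_trans (ler_wpM2l (ltW rho_gt0) (expr1D_le_lin _ _ n inv_ge0 inv_le1))) //.
  have q_lt : 3%:R ^+ n * m^-1 < 1 - rho.
    by rewrite ltr_pdivrMr // mulrC -ltr_pdivrMr.
  set q := 3%:R ^+ n * m^-1 in q_lt *.
  nra.
have [k0 le_nk0 k0_max] :=
  eventually_noninc_max _ (fun k => alpha_kn rho k n) _ _ (leq_addr b n) noninc.
by exists (alpha_kn rho k0 n); split; first by exists k0.
Qed.

Theorem theorem2p3 (R : archiRealFieldType) (n : nat) (rho eps : R) (t : nat)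
  (hn : (1 <= n)%N) (hrho0 : 0 < rho) (hrho1 : rho < 1) (heps : 0 < eps)
  (ht : (n <= t)%N) :
  (forall x v : nat -> R,
     (forall i, (i < n)%N -> `|x i| <= 1) ->
     (forall k, (n <= k)%N -> (k <= t)%N -> `|v k| <= eps) ->
     recur n rho x v t ->
     x t <= max_value n rho eps t) /\
  (exists x v : nat -> R,
     (forall i, (i < n)%N -> x i = (-1) ^+ (n - 1 - i)) /\
     (forall k, (n <= k)%N -> (k <= t)%N -> v k = eps) /\
     recur n rho x v t /\
     x t = max_value n rho eps t) /\
  (exists a, is_alpha_n rho n a) /\
  (forall a, is_alpha_n rho n a ->
     max_value n rho eps t < a + eps * (1 - rho) ^- n).
Proof.
have rho_neq0 : rho != 0 := lt0r_neq0 hrho0.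
split.
  move=> x v x_le1 v_le recx; rewrite (recur_solution _ _ _ hn rho_neq0 _ _ _ recx) //.
  by rewrite lerD ?homsol_le_alpha ?partsol_le.
split.
  pose x0 i := (-1) ^+ (n - 1 - i) : R.
  exists (fun m => homsol R n rho x0 m + partsol R n rho (fun=> eps) m), (fun=> eps).
  split; first by move=> i lt_in; rewrite homsol_small ?partsol_small ?addr0.
  split=> //; split; first exact: recur_homsol_partsol.
  by rewrite homsol_alt_sign ?partsol_const.
split; first exact: alpha_n_exists.
by move=> a; apply: max_value_lt.
Qed.
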